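(* Let $\mathfrak g$ be a finite-dimensional real Lie algebra that has an abelian ideal of codimension one. Then $\mathfrak g$ admits an inner product with a geodesic basis, unless $\mathfrak g$ is isomorphic to $\mathcal A_n$ for some $n\ge1$.
   Context: For an inner product $\langle\cdot,\cdot\rangle$ on a real Lie algebra $\mathfrak g$, a nonzero $X\in\mathfrak g$ is a geodesic element if $\langle X,[X,Y]\rangle=0$ for all $Y\in\mathfrak g$; a geodesic basis is a basis consisting of geodesic elements. For $n\ge1$, $\mathcal A_n$ denotes the $(n+1)$-dimensional real Lie algebra with basis $\{Y,X_1,\dots,X_n\}$ and brackets $[Y,X_i]=X_i$, $[X_i,X_j]=0$. *)

From HB Require Import structures.
From mathcomp Require Import all_boot all_order all_algebra.
From mathcomp Require Import reals.
Set Implicit Arguments. Unset Strict Implicit. Unset Printing Implicit Defensive.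
Import Order.TTheory GRing.Theory Num.Theory.
Local Open Scope ring_scope.

Section LieDefs.
Variable R : realFieldType.
Variable V : vectType R.

Definition bracket_bilinear (br : V -> V -> V) : Prop :=
  forall (a : R) (x y z : V),
    br (a *: x + y) z = a *: br x z + br y z /\
    br z (a *: x + y) = a *: br z x + br z y.

Definition lie_bracket (br : V -> V -> V) : Prop :=
  [/\ bracket_bilinear br,
      (forall x, br x x = 0) &
      (forall x y z, br x (br y z) + br y (br z x) + br z (br x y) = 0)].

Definition inner_product (ip : V -> V -> R) : Prop :=
  [/\ (forall (a : R) (x y z : V), ip (a *: x + y) z = a * ip x z + ip y z),
      (forall x y, ip x y = ip y x) &
      (forall x, x != 0 -> 0 < ip x x)].

Definition geodesic_element (ip : V -> V -> R) (br : V -> V -> V) (X : V) : Prop :=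
  X != 0 /\ forall Y, ip X (br X Y) = 0.

Definition has_geodesic_basis (ip : V -> V -> R) (br : V -> V -> V) : Prop :=
  exists B : seq V, basis_of fullv B /\ forall X, X \in B -> geodesic_element ip br X.

Definition has_abelian_ideal_codim1 (br : V -> V -> V) : Prop :=
  exists I : {vspace V},
    [/\ (\dim I).+1 = \dim (fullv : {vspace V}),
        (forall x y, y \in I -> br x y \in I) &
        (forall x y, x \in I -> y \in I -> br x y = 0)].
End LieDefs.

(* The Lie algebra A_n realised on 'rV[R]_(n.+1): coordinate 0 is Y,
   coordinate i (1 <= i <= n) is X_i; [Y, X_i] = X_i, [X_i, X_j] = 0.
   Extended bilinearly: [a, b] = a_0 * (b - b_0 Y) - b_0 * (a - a_0 Y). *)
Definition A_bracket (R : realFieldType) (n : nat) (a b : 'rV[R]_n.+1) : 'rV[R]_n.+1 :=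
  \row_(j < n.+1) (if j == ord0 then 0 else a ord0 ord0 * b ord0 j - b ord0 ord0 * a ord0 j).

Definition isomorphic_to_A (R : realFieldType) (V : vectType R) (br : V -> V -> V)
    (n : nat) : Prop :=
  exists f : V -> 'rV[R]_n.+1,
    [/\ (forall (a : R) (x y : V), f (a *: x + y) = a *: f x + f y),
        bijective f &
        (forall x y, f (br x y) = A_bracket (f x) (f y))].

From HB Require Import structures.
From mathcomp Require Import all_boot all_order all_algebra.
From mathcomp Require Import reals.
From mathcomp Require Import ring lra.
From Stdlib Require Import Classical.
Set Implicit Arguments. Unset Strict Implicit. Unset Printing Implicit Defensive.
Import Order.TTheory GRing.Theory Num.Theory.
Local Open Scope ring_scope.

(** Write g = I + R Y with I the abelian ideal and D = ad Y acting on I. For x in I the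
    geodesic condition reduces to <x, D x> = 0, and Y is geodesic once Y is orthogonal to I.
    If D is a scalar c, then g is abelian (c = 0; any orthonormal basis works) or, after
    rescaling Y, isomorphic to A_n (c <> 0). Otherwise pick v in I with w = D v not in R v
    and an inner product for which Y, w, v and a completion of them to a basis are
    orthogonal. Since <v, D v> = <v, w> = 0, the quadratic form Q x = <x, D x> satisfies
    Q (x + t v) = Q x + t B x with B x = <v, D x> + <x, w> linear, so any x with B x <> 0
    can be moved along v onto the cone Q = 0. Weighting w heavily makes B w <> 0; then w
    and the other basis vectors (first shifted along w so that B = 1) are moved onto the
    cone, which gives a geodesic basis. *)

Section LieBracket.
Variables (R : realFieldType) (V : vectType R) (br : V -> V -> V).
Hypothesis hL : lie_bracket br.

Let br_bilinear : bracket_bilinear br. Proof. by case: hL. Qed.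

Lemma br0l z : br 0 z = 0.
Proof. by have := (br_bilinear (-1) z z z).1; rewrite !scaleN1r !addNr. Qed.

Lemma br0r z : br z 0 = 0.
Proof. by have := (br_bilinear (-1) z z z).2; rewrite !scaleN1r !addNr. Qed.

Lemma brDl x y z : br (x + y) z = br x z + br y z.
Proof. by have := (br_bilinear 1 x y z).1; rewrite !scale1r. Qed.

Lemma brDr x y z : br z (x + y) = br z x + br z y.
Proof. by have := (br_bilinear 1 x y z).2; rewrite !scale1r. Qed.

Lemma brZl a x z : br (a *: x) z = a *: br x z.
Proof. by have := (br_bilinear a x 0 z).1; rewrite !addr0 br0l addr0. Qed.

Lemma brZr a x z : br z (a *: x) = a *: br z x.
Proof. by have := (br_bilinear a x 0 z).2; rewrite !addr0 br0r addr0. Qed.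

Lemma brxx x : br x x = 0. Proof. by case: hL. Qed.

Lemma brC x y : br x y = - br y x.
Proof.
apply/eqP; rewrite -addr_eq0; apply/eqP.
by have := brxx (x + y); rewrite brDl !brDr !brxx add0r addr0.
Qed.

End LieBracket.

Section InnerProduct.
Variables (R : realFieldType) (V : vectType R) (ip : V -> V -> R).
Hypothesis hip : inner_product ip.

Let ip_linear (a : R) (x y z : V) : ip (a *: x + y) z = a * ip x z + ip y z.
Proof. by case: hip. Qed.

Let ipC x y : ip x y = ip y x. Proof. by case: hip. Qed.

Lemma ip0l z : ip 0 z = 0.
Proof. by have := ip_linear (-1) z z z; rewrite scaleN1r mulN1r !addNr. Qed.

Lemma ip0r z : ip z 0 = 0. Proof. by rewrite ipC ip0l. Qed.

Lemma ipDl x y z : ip (x + y) z = ip x z + ip y z.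
Proof. by have := ip_linear 1 x y z; rewrite scale1r mul1r. Qed.

Lemma ipZl a x z : ip (a *: x) z = a * ip x z.
Proof. by have := ip_linear a x 0 z; rewrite !addr0 ip0l addr0. Qed.

Lemma ipDr x y z : ip z (x + y) = ip z x + ip z y.
Proof. by rewrite ipC ipDl !(ipC z). Qed.

Lemma ipZr a x z : ip z (a *: x) = a * ip z x.
Proof. by rewrite ipC ipZl (ipC z). Qed.

End InnerProduct.

Section CoordInnerProduct.
Variables (R : realFieldType) (V : vectType R) (n : nat) (e : n.-tuple V).
Variable lam : 'I_n -> R.
Hypotheses (e_basis : basis_of fullv e) (lam_gt0 : forall i, 0 < lam i).

Definition coord_ip (x y : V) : R := \sum_(i < n) lam i * coord e i x * coord e i y.

Lemma coord_ip_inner_product : inner_product coord_ip.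
Proof.
split.
- move=> a x y z; rewrite /coord_ip mulr_sumr -big_split /=; apply: eq_bigr => i _.
  by rewrite linearP /=; ring.
- by move=> x y; apply: eq_bigr => i _; ring.
- move=> x nx0; have sq_ge0 i : 0 <= lam i * coord e i x * coord e i x.
    by rewrite -mulrA mulr_ge0 ?(ltW (lam_gt0 i)) // -expr2 sqr_ge0.
  rewrite lt_def sumr_ge0 ?andbT //; apply: contra nx0 => /eqP/psumr_eq0P => /(_ (fun i _ => sq_ge0 i)) sq0.
  rewrite (coord_basis e_basis (memvf x)) big1 // => i _.
  have /eqP := sq0 i isT; rewrite -mulrA mulf_eq0 gt_eqF //=.
  by rewrite mulf_eq0 orbb => /eqP ->; rewrite scale0r.
Qed.

Lemma coord_ip_basis (j : 'I_n) u : coord_ip e`_j u = lam j * coord e j u.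
Proof.
have e_free := basis_free e_basis.
rewrite /coord_ip (bigD1 j) //= coord_free // eqxx mulr1 big1 ?addr0 // => i /negPf ij.
by rewrite coord_free // eq_sym ij mulr0 mul0r.
Qed.

End CoordInnerProduct.

Lemma abelian_geodesic_basis (R : realFieldType) (V : vectType R) (br : V -> V -> V) :
  (forall x y, br x y = 0) ->
  exists ip : V -> V -> R, inner_product ip /\ has_geodesic_basis ip br.
Proof.
move=> br0; pose e := vbasis (fullv : {vspace V}).
have hip : inner_product (coord_ip e (fun=> 1)).
  exact: coord_ip_inner_product (vbasisP fullv) (fun=> ltr01).
exists (coord_ip e (fun=> 1)); split => //; exists e; split; first exact: vbasisP.
move=> X Xe; split; first exact: basis_not0 (vbasisP fullv) Xe.
by move=> Z; rewrite br0 (ip0r hip).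
Qed.

Section EigenScalar.
Variables (R : fieldType) (V : vectType R).

Lemma scaler_indep2 (u v : V) (a b : R) : u != 0 -> v \notin <[u]>%VS ->
  a *: u + b *: v = 0 -> a = 0 /\ b = 0.
Proof.
move=> u0 vu uv0; have b0 : b = 0.
  apply/eqP; apply: contraNT vu => b0.
  rewrite -(scalerK b0 v) -[b *: v](addKr (a *: u)) uv0 addr0.
  by rewrite memvZ // memvN memvZ // memv_line.
split=> //; move/eqP: uv0; rewrite b0 scale0r addr0 scaler_eq0 (negPf u0) orbF.
exact/eqP.
Qed.

Variables (U : {vspace V}) (f : V -> V).
Hypotheses (fD : forall x y, f (x + y) = f x + f y) (fZ : forall a x, f (a *: x) = a *: f x).

Lemma eigen_everywhere_scalar : (forall v, v \in U -> f v \in <[v]>%VS) ->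
  exists c, forall v, v \in U -> f v = c *: v.
Proof.
move=> eigen; have [U0|U_neq0] := eqVneq U 0%VS.
  exists 0 => v; rewrite U0 memv0 => /eqP ->.
  by rewrite -(scale0r 0) fZ !scale0r.
have [u uU u0] : exists2 u, u \in U & u != 0.
  by exists (vpick U); rewrite ?memv_pick ?vpick0.
have /vlineP [c fu] := eigen u uU; exists c => v vU.
have [/vlineP [k ->]|vu] := boolP (v \in <[u]>%VS).
  by rewrite fZ fu !scalerA mulrC.
have /vlineP [cv fv] := eigen v vU.
have /vlineP [d fuv] := eigen (u + v) (memvD uU vU).
have : (c - d) *: u + (cv - d) *: v = 0.
  by rewrite !scalerBl addrACA -opprD -scalerDr -fuv fD fu fv subrr.
by rewrite fv; case/(scaler_indep2 u0 vu) => /subr0_eq -> /subr0_eq ->.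
Qed.

End EigenScalar.

Section CodimOneAbelianIdeal.
Variables (R : realFieldType) (V : vectType R) (br : V -> V -> V) (I : {vspace V}).
Hypotheses (hL : lie_bracket br) (dimI : (\dim I).+1 = \dim (fullv : {vspace V})).
Hypotheses (I_ideal : forall x y, y \in I -> br x y \in I)
  (I_abelian : forall x y, x \in I -> y \in I -> br x y = 0).

Definition Y := vpick (I^C)%VS.

Let dim_compl : \dim (I^C)%VS = 1%N.
Proof. by rewrite dimv_compl -dimI subSnn. Qed.

Lemma Y_neq0 : Y != 0.
Proof. by rewrite vpick0 -dimv_eq0 dim_compl. Qed.

Lemma Y_notin : Y \notin I.
Proof.
apply: contra Y_neq0 => YI.
by rewrite -memv0 -(capv_compl I) memv_cap YI memv_pick.
Qed.

Lemma fullv_ideal_line : (fullv = I + <[Y]>)%VS.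
Proof.
have line : (I^C)%VS = <[Y]>%VS.
  by apply/eqP; rewrite eq_sym eqEdim -memvE memv_pick dim_compl dim_vline Y_neq0.
by rewrite -line addv_complf.
Qed.

Lemma ideal_decomp Z : exists z a, z \in I /\ Z = z + a *: Y.
Proof.
have : Z \in (I + <[Y]>)%VS by rewrite -fullv_ideal_line memvf.
by case/memv_addP => z zI [u /vlineP [a ->] ->]; exists z, a.
Qed.

Lemma br_decomp Y0 x y a b : x \in I -> y \in I ->
  br (x + a *: Y0) (y + b *: Y0) = a *: br Y0 y - b *: br Y0 x.
Proof.
move=> xI yI; rewrite (brDl hL) !(brDr hL) (I_abelian xI yI) add0r.
by rewrite !(brZl hL) !(brZr hL) (brxx hL) !scaler0 addr0 (brC hL x) scalerN addrC.
Qed.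

Lemma basis_cons_ideal Y0 X : Y \in <[Y0]>%VS -> (I <= <<X>>)%VS ->
  (size X <= \dim I)%N -> basis_of fullv (Y0 :: X).
Proof.
move=> YY0 IX sX; rewrite basisEdim /= -dimI ltnS sX andbT span_cons fullv_ideal_line.
by rewrite addvC addvS // -memvE.
Qed.

Section BasisThroughIdeal.
Variables (n : nat) (e : n.+1.-tuple V).
Hypotheses (e_basis : basis_of fullv e) (eI : forall i : 'I_n, e`_(lift ord0 i) \in I).

Lemma sub_coord0_ideal z : z - coord e ord0 z *: e`_0 \in I.
Proof.
have := coord_basis e_basis (memvf z); rewrite big_ord_recl /= => ez.
by rewrite {1}ez addrC addKr memv_suml // => i _; rewrite memvZ // eI.
Qed.

Lemma coord0_ideal z : e`_0 \notin I -> z \in I -> coord e ord0 z = 0.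
Proof.
move=> e0I zI; apply/eqP; apply: contraNT e0I => c0.
rewrite -(scalerK c0 e`_0) -[_ *: e`_0](subKr z).
by rewrite memvZ // memvB // sub_coord0_ideal.
Qed.

End BasisThroughIdeal.

Lemma geodesic_Y ip : inner_product ip -> (forall u, u \in I -> ip Y u = 0) ->
  forall Z, ip Y (br Y Z) = 0.
Proof.
move=> hip YI Z; have [z [a [zI ->]]] := ideal_decomp Z.
by rewrite (brDr hL) (brZr hL) (brxx hL) scaler0 addr0 YI // I_ideal.
Qed.

(* For x in I only the Y-component of Z contributes to [x, Z]. *)
Lemma geodesic_ideal ip x : inner_product ip -> x \in I -> ip x (br Y x) = 0 ->
  forall Z, ip x (br x Z) = 0.
Proof.
move=> hip xI Q0 Z; have [z [a [zI ->]]] := ideal_decomp Z.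
rewrite (brDr hL) (brZr hL) I_abelian // add0r (brC hL x) scalerN -scaleNr.
by rewrite (ipZr hip) Q0 mulr0.
Qed.

Lemma abelian_of_ad_Y0 : (forall v, v \in I -> br Y v = 0) -> forall x y, br x y = 0.
Proof.
move=> adY0 x y; have [x1 [a [x1I ->]]] := ideal_decomp x.
have [y1 [b [y1I ->]]] := ideal_decomp y.
by rewrite br_decomp // !adY0 // !scaler0 subr0.
Qed.

Lemma isomorphic_A_of_ad_Y_scalar c : c != 0 ->
  (forall v, v \in I -> br Y v = c *: v) -> isomorphic_to_A br (\dim I).
Proof.
move=> c0 adY; pose Y' := c^-1 *: Y.
pose e : (\dim I).+1.-tuple V := cons_tuple Y' (vbasis I).
have e_basis : basis_of fullv e.
  apply: basis_cons_ideal; last by rewrite size_tuple.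
    by rewrite /Y' -{1}(scalerKV c0 Y) memvZ // memv_line.
  by rewrite (span_basis (vbasisP I)).
have eI (i : 'I_(\dim I)) : e`_(lift ord0 i) \in I.
  by apply: vbasis_mem; rewrite lift0 /=; apply: mem_nth; rewrite size_tuple.
have adY' z : z \in I -> br Y' z = z by move=> zI; rewrite (brZl hL) adY // scalerK.
have coordY k : c^-1 * coord e k Y = (ord0 == k)%:R.
  by rewrite -(scalarZ (coord e k)); exact: (coord_free ord0 k (basis_free e_basis)).
exists (fun x => \row_j coord e j x); split.
- by move=> a x y; apply/rowP => j; rewrite !mxE linearP.
- exists (fun r : 'rV_(\dim I).+1 => \sum_j r ord0 j *: e`_j).
    move=> x; rewrite [RHS](coord_basis e_basis (memvf x)).
    by apply: eq_bigr => j _; rewrite mxE.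
  by move=> r; apply/rowP => j; rewrite mxE coord_sum_free // (basis_free e_basis).
move=> x y; apply/rowP => k; rewrite !mxE.
have := br_decomp Y' (coord e ord0 x) (coord e ord0 y)
  (sub_coord0_ideal e_basis eI x) (sub_coord0_ideal e_basis eI y).
rewrite !subrK !adY' ?sub_coord0_ideal // => ->.
rewrite !linearB !linearZ /= coordY.
by have [->|k0] := eqVneq k ord0; rewrite /=; ring.
Qed.

Section NullShift.
Variables (ip : V -> V -> R) (v : V).
Hypotheses (hip : inner_product ip) (v_null : ip v (br Y v) = 0).

Definition ad_quad x := ip x (br Y x).

Definition ad_polar x := ip v (br Y x) + ip x (br Y v).

Lemma ad_quad_shift x t : ad_quad (x + t *: v) = ad_quad x + t * ad_polar x.
Proof.
rewrite /ad_quad /ad_polar (brDr hL) (brZr hL).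
by rewrite !(ipDl hip, ipDr hip, ipZl hip, ipZr hip) v_null; ring.
Qed.

Lemma ad_polarP a x y : ad_polar (a *: x + y) = a * ad_polar x + ad_polar y.
Proof.
rewrite /ad_polar (brDr hL) (brZr hL).
by rewrite !(ipDl hip, ipDr hip, ipZl hip, ipZr hip); ring.
Qed.

Definition null_shift x := x - (ad_quad x / ad_polar x) *: v.

Lemma ad_quad_null_shift x : ad_polar x != 0 -> ad_quad (null_shift x) = 0.
Proof. by move=> px; rewrite /null_shift -scaleNr ad_quad_shift mulNr mulfVK ?subrr. Qed.

Variable w : V.
Hypothesis polar_w : ad_polar w != 0.

Definition polar_normalize x := x + ((1 - ad_polar x) / ad_polar w) *: w.

Lemma ad_polar_normalize x : ad_polar (polar_normalize x) = 1.
Proof. by rewrite /polar_normalize addrC ad_polarP mulfVK // subrK. Qed.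

End NullShift.

Section NonScalarAdY.
Variable v : V.
Hypotheses (vI : v \in I) (w_notin : br Y v \notin <[v]>%VS).

Let w := br Y v.

Let wI : w \in I. Proof. exact: I_ideal. Qed.

Let v_neq0 : v != 0.
Proof. by apply: contraNneq w_notin => ->; rewrite /w (br0r hL) mem0v. Qed.

Let rest := vbasis (I :\: <<[:: w; v]>>).

Lemma basis_wv_rest : basis_of fullv (Y :: w :: v :: rest).
Proof.
have free_wv : free [:: w; v] by rewrite free_cons seq1_free span_seq1 w_notin.
have wv_sub : (<<[:: w; v]>> <= I)%VS.
  by apply/span_subvP => u; rewrite !inE => /orP [] /eqP ->.
apply: basis_cons_ideal; first exact: memv_line.
  rewrite (span_cat [:: w; v]) (span_basis (vbasisP _)) addvC addv_diff.
  exact: addvSl.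
rewrite /= size_tuple -(dimv_cap_compl I <<[:: w; v]>>) (capv_idPr wv_sub).
by rewrite (eqP free_wv) add2n.
Qed.

Let e : (size rest).+3.-tuple V := in_tuple (Y :: w :: v :: rest).
Let e_basis : basis_of fullv e := basis_wv_rest.
Let iw : 'I_(size rest).+3 := @Ordinal (size rest).+3 1 isT.
Let iv : 'I_(size rest).+3 := @Ordinal (size rest).+3 2 isT.
Let coupling := coord e iv (br Y w).
Let weight (i : 'I_(size rest).+3) := if i == iw then 1 + coupling ^+ 2 else 1.
Let ip := coord_ip e weight.

Let weight_gt0 i : 0 < weight i.
Proof. by rewrite /weight; case: ifP => // _; have := sqr_ge0 coupling; lra. Qed.

Let ip_inner : inner_product ip.
Proof. exact: (coord_ip_inner_product e_basis weight_gt0). Qed.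

Let ip_Y_ideal u : u \in I -> ip Y u = 0.
Proof.
move=> uI; have := coord_ip_basis weight e_basis ord0 u; rewrite /ip /= => ->.
suff -> : coord e ord0 u = 0 by rewrite mulr0.
apply: (coord0_ideal e_basis) uI; last exact: Y_notin.
case=> [[|[|j]] ltj] //=; apply/(subvP (diffvSl I _))/vbasis_mem/mem_nth; exact: ltj.
Qed.

Let ip_v u : ip v u = coord e iv u.
Proof. by have := coord_ip_basis weight e_basis iv u; rewrite /= mul1r. Qed.

Let ip_w u : ip w u = (1 + coupling ^+ 2) * coord e iw u.
Proof. exact: (coord_ip_basis weight e_basis iw u). Qed.

Let e_free : free e := basis_free e_basis.

Let v_null : ip v (br Y v) = 0.
Proof. by rewrite ip_v (coord_free iw iv e_free). Qed.

(* The weight on w is chosen so that ad_polar w = coupling + weight iw > 0. *)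
Let polar_w_neq0 : ad_polar ip v w != 0.
Proof.
rewrite /ad_polar -/w ip_v -/coupling ip_w (coord_free iw iw e_free) eqxx mulr1.
by apply: lt0r_neq0; have := sqr_ge0 coupling; nra.
Qed.

Lemma nonscalar_geodesic_basis :
  exists ip : V -> V -> R, inner_product ip /\ has_geodesic_basis ip br.
Proof.
pose null := null_shift ip v; pose norm := polar_normalize ip v w.
pose GB := [:: Y, null w, v & map (null \o norm) rest].
have null_I x : x \in I -> null x \in I by move=> xI; rewrite memvB ?memvZ.
have rest_I r : r \in rest -> r \in I by move/vbasis_mem; apply/subvP/diffvSl.
have GB_basis : basis_of fullv GB.
  rewrite basisEdim /= size_map (size_basis e_basis) leqnn andbT.
  rewrite -(span_basis e_basis); apply/span_subvP => z.
  have inGB u : u \in GB -> u \in <<GB>>%VS by exact: memv_span.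
  have v_GB : v \in <<GB>>%VS by rewrite inGB ?mem_cat ?inE ?eqxx ?orbT.
  have w_GB : w \in <<GB>>%VS.
    have -> : w = null w + (ad_quad ip w / ad_polar ip v w) *: v by rewrite subrK.
    by apply: memvD; rewrite ?memvZ // inGB ?inE ?eqxx ?orbT.
  rewrite !inE => /or4P [/eqP->|/eqP->|/eqP->|r_rest] //; first by rewrite inGB ?inE ?eqxx.
  have null_GB : null (norm z) \in <<GB>>%VS.
    by rewrite inGB // !inE (map_f (null \o norm) r_rest) !orbT.
  have -> : z = null (norm z) + (ad_quad ip (norm z) / ad_polar ip v (norm z)) *: v
      - ((1 - ad_polar ip v z) / ad_polar ip v w) *: w by rewrite subrK addrK.
  by apply: memvB; [apply: memvD|]; rewrite ?memvZ.
exists ip; split => //; exists GB; split => // X X_GB; split.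
  exact: basis_not0 GB_basis X_GB.
move: X_GB; rewrite !inE => /or4P [/eqP->|/eqP->|/eqP->|/mapP [r r_rest ->]].
- exact: geodesic_Y.
- by apply: geodesic_ideal; rewrite ?null_I // -/(ad_quad ip _) ad_quad_null_shift.
- exact: geodesic_ideal.
- apply: geodesic_ideal => //=; first exact/null_I/memvD/memvZ/wI/rest_I.
  by rewrite -/(ad_quad ip _) ad_quad_null_shift // ad_polar_normalize ?oner_neq0.
Qed.

End NonScalarAdY.

End CodimOneAbelianIdeal.

Theorem theorem1p3 (R : realType) (V : vectType R) (br : V -> V -> V) :
  lie_bracket br ->
  has_abelian_ideal_codim1 br ->
  ~ (exists n : nat, (1 <= n)%N /\ isomorphic_to_A br n) ->
  exists ip : V -> V -> R, inner_product ip /\ has_geodesic_basis ip br.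
Proof.
move=> hL [I [dimI I_ideal I_abelian]] not_A.
have [[v [vI w_notin]]|all_eigen] :=
  classic (exists v, v \in I /\ br (Y I) v \notin <[v]>%VS).
  exact: nonscalar_geodesic_basis w_notin.
have [c adY] : exists c, forall v, v \in I -> br (Y I) v = c *: v.
  apply: (eigen_everywhere_scalar (fun x y => brDr hL x y _) (fun a x => brZr hL a x _)).
  by move=> v vI; apply/negPn/negP => w_notin; apply: all_eigen; exists v.
have [c0|c_neq0] := eqVneq c 0.
  by apply/abelian_geodesic_basis/(abelian_of_ad_Y0 hL dimI I_abelian) => v /adY ->; rewrite c0 scale0r.
have [I0|I_neq0] := eqVneq I 0%VS.
  apply/abelian_geodesic_basis/(abelian_of_ad_Y0 hL dimI I_abelian) => v.
  by rewrite I0 memv0 => /eqP ->; rewrite (br0r hL).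
case: not_A; exists (\dim I); rewrite lt0n dimv_eq0 I_neq0; split=> //.
exact: (isomorphic_A_of_ad_Y_scalar hL dimI I_abelian c_neq0 adY).
Qed.
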